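(* Let $v\in S$ be a point with at least one irrational coordinate whose itinerary $\mathbb{X}_{a_1},\mathbb{X}_{a_2},\dots$ satisfies: $\mathbb{X}_{a_k}$ is of type $\mathbb{A}$ for all $k\ge m$, for some $m\ge1$. Then $G^{m-1}(v)$ lies on the edge $\{(x,0,0):0\le x\le1\}$ of $S$.
   Context: Let $S = \{(x,y,z)\in\mathbb{R}^3 : 0\le z\le y\le x\le 1\}$. For integers $n\ge1$ define $\mathbb{A}_n = \{\frac1{n+1} < x \le \frac1n,\ 0\le z\le y\le 1-nx\}$, $\mathbb{B}_n = \{0\le z\le 1-nx < y \le x\}$, $\mathbb{C}_n = \{1-nx < z \le y \le x \le \frac1n\}$; together with $\{(0,0,0)\}$ they partition $S$. The 3-dimensional Gauss map $G:S\to S$ is $G(0,0,0)=(0,0,0)$, $G(x,y,z)=\left(\frac1x-n,\frac yx,\frac zx\right)$ on $\mathbb{A}_n$, $G(x,y,z)=\left(\frac{1-y}{x}-n+1,\frac{x-y+z}{x},\frac{x-y}{x}\right)$ on $\mathbb{B}_n$, $G(x,y,z)=\left(\frac{1-z}{x}-n+1,\frac{x-z}{x},\frac{y-z}{x}\right)$ on $\mathbb{C}_n$. For a point $v$ whose forward orbit never hits the origin, its itinerary is the sequence $\mathbb{X}_{a_1},\mathbb{X}_{a_2},\dots$ ($\mathbb{X}\in\{\mathbb{A},\mathbb{B},\mathbb{C}\}$) with $G^{k-1}(v)\in\mathbb{X}_{a_k}$. *)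

From Stdlib Require Import Reals Lra QArith Qreals.
Open Scope R_scope.

Definition point : Type := (R * R * R)%type.

Definition inS (p : point) : Prop :=
  let '(x, y, z) := p in 0 <= z /\ z <= y /\ y <= x /\ x <= 1.

Definition inA (n : nat) (p : point) : Prop :=
  let '(x, y, z) := p in
  (1 <= n)%nat /\ 1 / (INR n + 1) < x /\ x <= 1 / INR n /\
  0 <= z /\ z <= y /\ y <= 1 - INR n * x.

Definition inB (n : nat) (p : point) : Prop :=
  let '(x, y, z) := p in
  (1 <= n)%nat /\ 0 <= z /\ z <= 1 - INR n * x /\ 1 - INR n * x < y /\ y <= x.

Definition inC (n : nat) (p : point) : Prop :=
  let '(x, y, z) := p in
  (1 <= n)%nat /\ 1 - INR n * x < z /\ z <= y /\ y <= x /\ x <= 1 / INR n.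

Definition origin : point := (0, 0, 0).

(* For (x,y,z) in S \ {0}: the index n of A_n and C_n is floor(1/x)
   (= up(1/x) - 1), and the index of B_m is the unique m with
   1 - m x < y, i.e. m = up((1-y)/x).  Point (x,y,z) is in A_n iff
   y <= 1 - n x; otherwise it is in B_m iff z <= 1 - m x; otherwise in C_n. *)
Definition G (p : point) : point :=
  let '(x, y, z) := p in
  if Req_EM_T x 0 then origin else
  let n := IZR (up (1 / x) - 1) in
  if Rle_dec y (1 - n * x) then (1 / x - n, y / x, z / x) else
  let m := IZR (up ((1 - y) / x)) in
  if Rle_dec z (1 - m * x) then ((1 - y) / x - m + 1, (x - y + z) / x, (x - y) / x)
  else ((1 - z) / x - n + 1, (x - z) / x, (y - z) / x).

Definition irrational (r : R) : Prop := ~ exists q : Q, Q2R q = r.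

Definition has_irrational_coord (p : point) : Prop :=
  let '(x, y, z) := p in irrational x \/ irrational y \/ irrational z.

(* On A_n the Gauss map is (x, y, z) |-> (1/x - n, y/x, z/x), and the first
   coordinates x, x' of two consecutive points of an A-run satisfy
   x x' = 1 - n x < 1/(n+1) <= 1/2.  Hence the y-coordinate at least doubles
   every two steps; since it stays below 1 along the run, it must vanish at
   the start of the run, and then so does z <= y. *)
From Stdlib Require Import Reals Lra QArith Qreals Lia.
Open Scope R_scope.

Definition ycoord (p : point) : R := let '(_, y, _) := p in y.

Lemma inA_INR_ge1 {n : nat} {p : point} : inA n p -> 1 <= INR n.
Proof.
  destruct p as [[x y] z]; intros [Hn _]; exact (le_INR 1 n Hn).
Qed.

Lemma inA_fst_bounds {n : nat} {x y z : R} : inA n (x, y, z) -> 0 < x <= 1.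
Proof.
  intros HA; pose proof (inA_INR_ge1 HA) as Hn.
  destruct HA as [_ [Hlo [Hhi _]]].
  assert (0 < 1 / (INR n + 1)) by (apply Rdiv_lt_0_compat; lra).
  assert (1 / INR n <= 1).
  { unfold Rdiv; rewrite Rmult_1_l, <- Rinv_1; apply Rinv_le_contravar; lra. }
  lra.
Qed.

Lemma inA_snd_bounds {n : nat} {x y z : R} : inA n (x, y, z) -> 0 <= y < 1.
Proof.
  intros HA; pose proof (inA_INR_ge1 HA) as Hn; destruct (inA_fst_bounds HA) as [Hx _].
  destruct HA as [_ [_ [_ [Hz [Hzy Hy]]]]].
  split; nra.
Qed.

Lemma inA_floor_inv {n : nat} {x y z : R} :
  inA n (x, y, z) -> IZR (up (1 / x) - 1) = INR n.
Proof.
  intros HA; pose proof (inA_INR_ge1 HA) as Hn; destruct (inA_fst_bounds HA) as [Hx _].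
  destruct HA as [_ [Hlo [Hhi _]]].
  assert (Hge : INR n <= 1 / x).
  { apply (Rmult_le_reg_r x); [lra|].
    replace (1 / x * x) with 1 by (field; lra).
    apply Rle_trans with (INR n * (1 / INR n));
      [apply Rmult_le_compat_l; lra | right; field; lra]. }
  assert (Hlt : 1 / x < INR n + 1).
  { apply (Rmult_lt_reg_r x); [lra|].
    replace (1 / x * x) with 1 by (field; lra).
    apply Rle_lt_trans with ((INR n + 1) * (1 / (INR n + 1)));
      [right; field; lra | apply Rmult_lt_compat_l; lra]. }
  rewrite INR_IZR_INZ in *.
  rewrite <- (up_tech (1 / x) (Z.of_nat n)); [| lra | rewrite plus_IZR; simpl; lra].
  f_equal; ring.
Qed.

Lemma G_on_A {n : nat} {x y z : R} :
  inA n (x, y, z) -> G (x, y, z) = (1 / x - INR n, y / x, z / x).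
Proof.
  intros HA; destruct (inA_fst_bounds HA) as [Hx _].
  pose proof (inA_floor_inv HA) as Hfloor.
  destruct HA as [_ [_ [_ [_ [_ Hy]]]]].
  unfold G; rewrite Hfloor.
  destruct (Req_EM_T x 0); [lra|].
  destruct (Rle_dec y (1 - INR n * x)); [reflexivity | lra].
Qed.

Lemma inA_mul_G_fst_lt_half {n : nat} {x y z : R} :
  inA n (x, y, z) -> x * (1 / x - INR n) < 1 / 2.
Proof.
  intros HA; pose proof (inA_INR_ge1 HA) as Hn; destruct (inA_fst_bounds HA) as [Hx _].
  destruct HA as [_ [Hlo _]].
  replace (x * (1 / x - INR n)) with (1 - INR n * x) by (field; lra).
  assert (Hx1 : 1 < (INR n + 1) * x).
  { replace 1 with ((INR n + 1) * (1 / (INR n + 1))) at 1 by (field; lra).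
    apply Rmult_lt_compat_l; lra. }
  nra.
Qed.

Lemma ycoord_G_G_inA_ge {n n' : nat} {p : point} :
  inA n p -> inA n' (G p) -> 2 * ycoord p <= ycoord (G (G p)).
Proof.
  destruct p as [[x y] z]; intros HA HA'.
  pose proof (inA_mul_G_fst_lt_half HA) as Hhalf.
  destruct (inA_snd_bounds HA) as [Hy _].
  rewrite (G_on_A HA) in HA' |- *.
  destruct (inA_fst_bounds HA') as [Hx' _].
  rewrite (G_on_A HA'); simpl.
  destruct (inA_fst_bounds HA) as [Hx _].
  set (x' := 1 / x - INR n) in *.
  replace (y / x / x') with (y / (x * x')) by (field; lra).
  apply (Rmult_le_reg_r (x * x')); [nra|].
  replace (y / (x * x') * (x * x')) with y by (field; nra).
  nra.
Qed.

Lemma doubling_bounded_nonpos (u : nat -> R) (B : R) :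
  (forall k, 2 * u k <= u (S (S k))) -> (forall k, u k <= B) -> u 0%nat <= 0.
Proof.
  intros Hdouble Hbound.
  assert (Hgrow : forall k, 2 ^ k * u 0%nat <= u (2 * k)%nat).
  { induction k as [|k IH]; [simpl; lra|].
    replace (2 * S k)%nat with (S (S (2 * k))) by lia.
    specialize (Hdouble (2 * k)%nat); change (2 ^ S k) with (2 * 2 ^ k); rewrite Rmult_assoc; lra. }
  apply Rnot_lt_le; intros Hpos.
  destruct (Pow_x_infinity 2 ltac:(rewrite Rabs_right; lra) ((B + 1) / u 0%nat))
    as [N HN].
  specialize (HN N (le_n N)); rewrite Rabs_right in HN by (apply Rle_ge, pow_le; lra).
  specialize (Hgrow N); specialize (Hbound (2 * N)%nat).
  apply Rge_le, (Rmult_le_compat_r (u 0%nat)) in HN; [|lra].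
  replace ((B + 1) / u 0%nat * u 0%nat) with (B + 1) in HN by (field; lra).
  lra.
Qed.

Theorem mainTheorem15 (v : point) (m : nat) :
  inS v ->
  has_irrational_coord v ->
  (forall k : nat, Nat.iter k G v <> origin) ->
  (1 <= m)%nat ->
  (forall k : nat, (m <= k)%nat -> exists n : nat, inA n (Nat.iter (k - 1) G v)) ->
  exists x : R, Nat.iter (m - 1) G v = (x, 0, 0) /\ 0 <= x /\ x <= 1.
Proof.
  intros _ _ _ Hm HA.
  set (p := fun k => Nat.iter (m - 1 + k) G v).
  assert (HpA : forall k, exists n, inA n (p k)).
  { intro k; destruct (HA (m + k)%nat) as [n Hn]; [lia|]; exists n; unfold p.
    replace (m - 1 + k)%nat with (m + k - 1)%nat by lia; exact Hn. }
  assert (HpS : forall k, p (S k) = G (p k)).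
  { intro k; unfold p; replace (m - 1 + S k)%nat with (S (m - 1 + k)) by lia.
    reflexivity. }
  assert (Hy0 : ycoord (p 0%nat) <= 0).
  { apply (doubling_bounded_nonpos (fun k => ycoord (p k)) 1).
    - intro k; destruct (HpA k) as [n Hn]; destruct (HpA (S k)) as [n' Hn'].
      rewrite !HpS; rewrite HpS in Hn'; exact (ycoord_G_G_inA_ge Hn Hn').
    - intro k; destruct (HpA k) as [n Hn]; destruct (p k) as [[x y] z].
      apply Rlt_le, (inA_snd_bounds Hn). }
  destruct (HpA 0%nat) as [n Hn]; unfold p in Hn, Hy0; rewrite Nat.add_0_r in Hn, Hy0.
  destruct (Nat.iter (m - 1) G v) as [[x y] z]; simpl in Hy0.
  destruct (inA_snd_bounds Hn) as [Hy _]; destruct (inA_fst_bounds Hn) as [Hx Hx1].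
  destruct Hn as [_ [_ [_ [Hz [Hzy _]]]]].
  exists x; repeat split; try lra.
  repeat f_equal; lra.
Qed.
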